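(* Let $I$ be a common interval of $\mathcal{P}$ with $|I|\geq 2$. Then $I$ is $b$-nested if and only if one of the following holds: (a) $I$ is a $P$-interval and there exists $x_h\in D(I)$ such that $Int(x_h)$ is a $b$-nested common interval of size at least $|I|-b$; (b) $I$ is a $Q$-interval such that all intervals $Int(x_i)$ with $x_i\in D(I)$ are $b$-small, with at most one exception, which is a $b$-large $b$-nested common interval.
   Context: Let $n\geq 1$, $K\geq 1$ and let $\mathcal{P}=\{P_1,\ldots,P_K\}$ be permutations of $\{1,\ldots,n\}$ with $P_1=(1,2,\ldots,n)$. For integers $i\leq j$ write $(i..j)=\{i,\ldots,j\}$. A common interval of $\mathcal{P}$ is a set of integers occupying consecutive positions in every $P_k$; all have the form $(i..j)$, and singletons and $(1..n)$ are common. Fix a positive integer $b$. A common interval $I$ is $b$-small if $|I|\leq b$, $b$-large otherwise; it is $b$-nested if $|I|=1$ or $I$ strictly contains a $b$-nested common interval $J$ with $|J|\geq|I|-b$ (recursive on size). Two intervals $(i..j)$, $(k..l)$ overlap if $i<k\leq j<l$ or $k<i\leq l<j$. A common interval is strong if it overlaps no other common interval. The PQ-tree $T$: nodes are the strong common intervals ($Int(x)$ is the interval of node $x$), root $(1..n)$, leaves the singletons, parent of $y$ is the node whose interval is the smallest strong common interval strictly containing $Int(y)$. A node $x$ with children set $D$ is a $P$-node if no union $\bigcup_{z\in D'}Int(z)$, $D'\subset D$, $2\leq|D'|<|D|$, is common; otherwise it is a $Q$-node with children ordered $y_1,\ldots,y_r$ so that $\max Int(y_i)+1=\min Int(y_{i+1})$.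 It is known that a set is a common interval iff it is $Int(x)$ for a node $x$ or the union of the intervals of consecutive children of a unique $Q$-node. The domain $D(I)$ of a common interval $I$ is the set of children of $x$ if $I=Int(x)$ is strong, and otherwise the set of consecutive children of the $Q$-node whose intervals have union $I$. A $P$-interval is a strong common interval $Int(x)$ with $x$ a $P$-node; all other common intervals are $Q$-intervals. *)

(* Permutations of {1..n} are sequences of nats;
   intervals (i..j) are pairs (i, j) of nats. *)
From mathcomp Require Import all_boot.
Set Implicit Arguments. Unset Strict Implicit. Unset Printing Implicit Defensive.

Definition interval := (nat * nat)%type.

(* the set of integers (i..j) = {i, ..., j} (empty if j < i) *)
Definition iset (I : interval) : seq nat := iota I.1 (I.2.+1 - I.1).
Definition isize (I : interval) : nat := I.2.+1 - I.1.

(* a (nonempty) set S of integers occupies consecutive positions in every p of P *)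
Definition is_common_set (P : seq (seq nat)) (S : seq nat) : bool :=
  (S != [::]) &&
  all (fun p => has (fun a => perm_eq (take (size (undup S)) (drop a p)) (undup S))
                    (iota 0 (size p))) P.

Definition common (P : seq (seq nat)) (I : interval) : bool := is_common_set P (iset I).

Definition all_intervals (n : nat) : seq interval :=
  [seq (i, j) | i <- iota 1 n, j <- iota i (n.+1 - i)].

Definition overlap (I J : interval) : bool :=
  ((I.1 < J.1) && (J.1 <= I.2) && (I.2 < J.2)) ||
  ((J.1 < I.1) && (I.1 <= J.2) && (J.2 < I.2)).

Definition strong (n : nat) (P : seq (seq nat)) (I : interval) : bool :=
  common P I && all (fun J => ~~ (common P J && overlap I J)) (all_intervals n).

Definition isubset (J I : interval) : bool := (I.1 <= J.1) && (J.2 <= I.2).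
Definition iproper (J I : interval) : bool := isubset J I && (J != I).

(* y is a child of x in the PQ-tree: Int(x) is the smallest strong common
   interval strictly containing Int(y) *)
Definition child (n : nat) (P : seq (seq nat)) (y x : interval) : bool :=
  [&& strong n P x, strong n P y, iproper y x &
   all (fun z => (strong n P z && iproper y z) ==> isubset x z) (all_intervals n)].

Definition children (n : nat) (P : seq (seq nat)) (x : interval) : seq interval :=
  [seq y <- all_intervals n | child n P y x].

Definition union_set (D : seq interval) : seq nat := flatten (map iset D).

Definition Pnode (n : nat) (P : seq (seq nat)) (x : interval) : Prop :=
  strong n P x /\
  forall D' : seq interval, subseq D' (children n P x) ->
    2 <= size D' < size (children n P x) -> ~~ is_common_set P (union_set D').

Definition Qnode (n : nat) (P : seq (seq nat)) (x : interval) : Prop :=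
  strong n P x /\ ~ Pnode n P x.

Definition P_interval (n : nat) (P : seq (seq nat)) (I : interval) : Prop := Pnode n P I.
Definition Q_interval (n : nat) (P : seq (seq nat)) (I : interval) : Prop :=
  common P I /\ ~ P_interval n P I.

Definition inD (n : nat) (P : seq (seq nat)) (I y : interval) : Prop :=
  if strong n P I then is_true (child n P y I)
  else exists x, [/\ Qnode n P x, child n P y x, isubset y I &
                     union_set [seq z <- children n P x | isubset z I] =i iset I].

Inductive bnested (P : seq (seq nat)) (b : nat) : interval -> Prop :=
| bnested_single I : common P I -> isize I = 1 -> bnested P b I
| bnested_step I J : common P I -> common P J -> iproper J I ->
    isize I <= isize J + b -> bnested P b J -> bnested P b I.

Definition bsmall (b : nat) (I : interval) : bool := isize I <= b.

From Pilot Require Import Defs.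
From mathcomp Require Import all_boot zify.
From Stdlib Require Import Classical_Prop.
Set Implicit Arguments. Unset Strict Implicit. Unset Printing Implicit Defensive.

(* For |I| >= 2 the domain D(I) consists exactly of the maximal strong common intervals
   strictly inside I; they are pairwise disjoint.  Along a b-nested chain each step removes
   at most b points, and a strong interval overlaps no common interval, so a chain starting
   above a b-large strong interval y must pass through y itself.  This gives the forward
   direction: for a P-node, the common interval of the first step lies inside a child; for
   a Q-interval, two disjoint b-large members of D(I) cannot both be passed.  Conversely, an
   interval that is not a P-interval splits into two common halves, so the maximal strong
   subintervals at its two ends differ and one of them is b-small; removing it leaves a
   common interval whose maximal strong subintervals are among those of I, and induction
   on the size concludes. *)

(** * Consecutive subsets of a sequence *)

Section Consecutive.
Variable T : eqType.
Implicit Types (p X : seq T) (S : pred T).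

Definition window p X :=
  has (fun a => perm_eq (take (size (undup X)) (drop a p)) (undup X)) (iota 0 (size p)).

Definition consecutive p S : Prop :=
  (forall x, S x -> x \in p) /\
  forall u v w, S u -> S v -> w \in p -> index u p <= index w p <= index v p -> S w.

Lemma eq_consecutive p S S' : S =1 S' -> consecutive p S -> consecutive p S'.
Proof.
move=> eS [Sp Sconv]; split=> [x|u v w]; rewrite -!eS; [exact: Sp | exact: Sconv].
Qed.

Lemma mem_mid_index (s1 W s2 : seq T) x : uniq (s1 ++ W ++ s2) ->
  (x \in W) = (x \in s1 ++ W ++ s2) &&
              (size s1 <= index x (s1 ++ W ++ s2) < size s1 + size W).
Proof.
rewrite !cat_uniq => /and3P[_ /hasPn s1W _].
rewrite index_cat !mem_cat; have [xs1|xs1] /= := boolP (x \in s1).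
  have xW : x \notin W by apply: contraL xs1 => xW; apply: s1W; rewrite mem_cat xW.
  by move: xs1; rewrite (negPf xW) -index_mem; lia.
rewrite index_cat; have [xW|xW] /= := boolP (x \in W).
  by move: xW; rewrite -index_mem; lia.
by lia.
Qed.

Lemma window_consecutive p X : uniq p -> window p X -> consecutive p (fun x => x \in X).
Proof.
move=> up /hasP[a _ permW].
set W := take _ (drop a p) in permW.
set s1 := take a p; set s2 := drop (size (undup X)) (drop a p).
have Ep : p = s1 ++ W ++ s2 by rewrite /s1 /W /s2 !cat_take_drop.
have XW x : (x \in X) = (x \in W) by rewrite (perm_mem permW) mem_undup.
have memW x : (x \in W) = (x \in p) && (size s1 <= index x p < size s1 + size W).
  by rewrite Ep; apply: mem_mid_index; rewrite -Ep.
split=> [x|u v w]; rewrite ?XW ?memW; first by case/andP.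
case/andP=> _ /andP[u1 u2] /andP[_ /andP[v1 v2]] -> /andP[uw wv] /=.
by rewrite (leq_trans u1 uw) (leq_ltn_trans wv v2).
Qed.

Lemma consecutive_window p X : uniq p -> X != [::] -> consecutive p (fun x => x \in X) ->
  window p X.
Proof.
case: X => [//|x0 X'] up _; set X := x0 :: X' => -[Xp Xconv].
have inX i : (i < size p) && (nth x0 p i \in X) -> i <= size p by case/andP=> /ltnW.
have exX : exists i, (i < size p) && (nth x0 p i \in X).
  have x0p : x0 \in p by apply: Xp; rewrite inE eqxx.
  by exists (index x0 p); rewrite index_mem x0p nth_index ?inE ?eqxx.
case: (ex_minnP exX) => a /andP[ap aX] amin.
case: (ex_maxnP exX inX) => M /andP[Mp MX] Mmax.
have idxX x : x \in X -> a <= index x p <= M.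
  move=> xX; have xp := Xp _ xX.
  have ix : (index x p < size p) && (nth x0 p (index x p) \in X).
    by rewrite index_mem xp nth_index.
  by rewrite (amin _ ix) (Mmax _ ix).
have aM : a <= M by move: (idxX _ aX); rewrite index_uniq //; case/andP.
set W := take (M.+1 - a) (drop a p).
set s1 := take a p; set s2 := drop (M.+1 - a) (drop a p).
have Ep : p = s1 ++ W ++ s2 by rewrite /s1 /W /s2 !cat_take_drop.
have s1E : size s1 = a by rewrite /s1 size_take ap.
have WE : size W = M.+1 - a by rewrite /W size_take size_drop; case: ifP; lia.
have memW x : (x \in W) = (x \in p) && (size s1 <= index x p < size s1 + size W).
  by rewrite Ep; apply: mem_mid_index; rewrite -Ep.
have WX : W =i undup X.
  move=> x; rewrite mem_undup memW s1E WE; apply/idP/idP.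
    case/andP=> xp ix; apply: (Xconv (nth x0 p a) (nth x0 p M)) => //.
    by rewrite !index_uniq //; lia.
  by move=> xX; rewrite Xp //=; have := idxX _ xX; lia.
have permW : perm_eq W (undup X).
  by apply: uniq_perm; rewrite ?undup_uniq // /W take_uniq // drop_uniq.
apply/hasP; exists a; first by rewrite mem_iota; lia.
by rewrite -(perm_size permW) WE.
Qed.

Lemma consecutiveI p SA SB S : consecutive p SA -> consecutive p SB ->
  (forall x, S x = SA x && SB x) -> consecutive p S.
Proof.
move=> [Ap Aconv] [_ Bconv] eS; split=> [x|u v w]; rewrite !eS; first by case/andP=> /Ap.
by move=> /andP[Au Bu] /andP[Av Bv] wp uwv; rewrite (Aconv u v w) // (Bconv u v w).
Qed.

Lemma consecutiveD p SA SB S b0 : consecutive p SA -> consecutive p SB ->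
  SB b0 -> ~~ SA b0 -> (forall x, S x = SA x && ~~ SB x) -> consecutive p S.
Proof.
move=> [Ap Aconv] [Bp Bconv] Bb0 Ab0 eS; split=> [x|u v w]; rewrite !eS.
  by case/andP=> /Ap.
move=> /andP[Au Bu] /andP[Av Bv] wp /andP[uw wv].
have Aw : SA w by apply: (Aconv u v w) => //; rewrite uw wv.
rewrite Aw /=; apply: contra Ab0 => Bw.
have [up vp] := (Ap _ Au, Ap _ Av).
case: (leqP (index b0 p) (index u p)) => [b0u|ub0].
  by case/negP: Bu; apply: (Bconv b0 w u); rewrite ?b0u.
case: (leqP (index v p) (index b0 p)) => [vb0|b0v].
  by case/negP: Bv; apply: (Bconv w b0 v); rewrite ?wv.
by apply: (Aconv u v b0) => //; [exact: Bp | rewrite (ltnW ub0) (ltnW b0v)].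
Qed.

Lemma consecutiveU p SA SB S c : consecutive p SA -> consecutive p SB ->
  SA c -> SB c -> (forall x, S x = SA x || SB x) -> consecutive p S.
Proof.
move=> [Ap Aconv] [Bp Bconv] Ac Bc eS; split=> [x|u v w]; rewrite !eS.
  by case/orP=> [/Ap|/Bp].
move=> Su Sv wp /andP[uw wv]; have cp := Ap _ Ac.
case: (leqP (index w p) (index c p)) => [wc|cw].
  by case/orP: Su => Su; [rewrite (Aconv u c w) ?uw | rewrite (Bconv u c w) ?uw ?orbT].
by case/orP: Sv => Sv;
  [rewrite (Aconv c v w) ?wv ?(ltnW cw) | rewrite (Bconv c v w) ?wv ?(ltnW cw) ?orbT].
Qed.

End Consecutive.

Lemma mem_iset x (I : interval) : (x \in iset I) = (I.1 <= x <= I.2).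
Proof. by rewrite /iset mem_iota; apply/idP/idP; lia. Qed.

Lemma iproperE (J I : interval) :
  iproper J I = [&& I.1 <= J.1, J.2 <= I.2 & (I.1 < J.1) || (J.2 < I.2)].
Proof.
case: J I => a b [c d]; rewrite /iproper /isubset xpair_eqE negb_and /=.
by case: (leqP c a) => ca; case: (leqP b d) => bd //=; rewrite !neq_ltn ?ltnNge ?ca ?bd ?orbF.
Qed.

Lemma interval_ext (J I : interval) : J.1 = I.1 -> J.2 = I.2 -> J = I.
Proof. by case: J I => a b [c d] /= -> ->. Qed.

Lemma isubset_trans (K J I : interval) : isubset K J -> isubset J I -> isubset K I.
Proof. by rewrite /isubset => /andP[? ?] /andP[? ?]; apply/andP; split; lia. Qed.

Lemma iproper_sub (J I : interval) : iproper J I -> isubset J I.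
Proof. by case/andP. Qed.

Lemma iproper_subN (J I : interval) : iproper J I -> ~~ isubset I J.
Proof. by rewrite iproperE /isubset => /and3P[? ? ?]; apply/negP=> /andP[? ?]; lia. Qed.

Lemma isubset_mem (J I : interval) e : isubset J I -> J.1 <= e <= J.2 -> I.1 <= e <= I.2.
Proof. by rewrite /isubset => /andP[? ?] /andP[? ?]; apply/andP; split; lia. Qed.

Lemma isubset_antisym (J I : interval) : isubset J I -> isubset I J -> J = I.
Proof. by rewrite /isubset => /andP[? ?] /andP[? ?]; apply: interval_ext; lia. Qed.

Lemma iproper_sup_of_disjoint (c1 c2 U z : interval) : c2.1 <= c2.2 ->
  c1.2 < c2.1 \/ c2.2 < c1.1 -> isubset c1 U -> isubset c2 U -> isubset U z -> iproper c1 z.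
Proof.
by rewrite iproperE /isubset => ? ? /andP[? ?] /andP[? ?] /andP[? ?]; apply/and3P; split; lia.
Qed.

Lemma isize_iproper (J I : interval) : J.1 <= J.2 -> iproper J I -> isize J < isize I.
Proof. by rewrite iproperE /isize => ? /and3P[? ? ?]; lia. Qed.

Lemma iproper_nontrivial (J I : interval) : J.1 <= J.2 -> iproper J I -> I.1 < I.2.
Proof. by rewrite iproperE => ? /and3P[? ? ?]; lia. Qed.

Lemma mem_all_intervals n (I : interval) :
  (I \in all_intervals n) = [&& 1 <= I.1, I.1 <= I.2 & I.2 <= n].
Proof.
case: I => i j /=; apply/allpairsPdep/idP.
  by case=> x [y [+ + [-> ->]]]; rewrite !mem_iota => ? ?; apply/and3P; split; lia.
by move=> /and3P[? ? ?]; exists i, j; rewrite !mem_iota; split=> //; apply/andP; split; lia.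
Qed.

Lemma all_intervals_uniq n : uniq (all_intervals n).
Proof.
apply: allpairs_uniq_dep => [||[x y] [x' y'] _ _ /= [-> ->]] //; first exact: iota_uniq.
by move=> x _; apply: iota_uniq.
Qed.

Lemma index_iota1 n x : 1 <= x <= n -> index x (iota 1 n) = x.-1.
Proof.
case: x => [//|x] x_n /=; have -> : x.+1 = nth 0 (iota 1 n) x by rewrite nth_iota; lia.
by rewrite index_uniq ?iota_uniq ?size_iota; lia.
Qed.

Lemma mem_union_set (D : seq interval) x :
  reflect (exists2 y, y \in D & x \in iset y) (x \in union_set D).
Proof. exact: flatten_mapP. Qed.

Lemma size_gt1 (T : eqType) (s : seq T) a b : a \in s -> b \in s -> a != b -> 1 < size s.
Proof. by case: s => [|x [|y t]] //=; rewrite !inE => /eqP -> /eqP ->; rewrite eqxx. Qed.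

Lemma size_filter_lt (T : eqType) (a : pred T) s c : c \in s -> ~~ a c ->
  size (filter a s) < size s.
Proof.
move=> cs ac; rewrite size_filter -(count_predC a s) -addn1 leq_add2l.
by rewrite lt0n -lt0n -has_count; apply/hasP; exists c.
Qed.

Lemma uniq_size_gt1 (T : eqType) (s : seq T) : uniq s -> 1 < size s ->
  exists a b, [/\ a \in s, b \in s & a != b].
Proof.
case: s => [|a [|b s]] //= /andP[+ _] _; rewrite inE negb_or => /andP[ab _].
by exists a, b; rewrite !inE !eqxx orbT.
Qed.

Lemma exists_notin_size (T : eqType) (s1 s2 : seq T) : uniq s2 -> size s1 < size s2 ->
  exists2 x, x \in s2 & x \notin s1.
Proof.
move=> u2 lt12; have [/allP s21|/allPn[x x2 x1]] := boolP (all (mem s1) s2); last by exists x.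
by move: lt12; rewrite ltnNge (uniq_leq_size u2 s21).
Qed.

Lemma union_set_sub (D : seq interval) (U d : interval) : union_set D =i iset U -> d \in D ->
  d.1 <= d.2 -> isubset d U.
Proof.
move=> DU dD d12; have inU e : d.1 <= e <= d.2 -> U.1 <= e <= U.2.
  by rewrite -!mem_iset -DU => ed; apply/mem_union_set; exists d.
have := inU d.1; have := inU d.2; rewrite /isubset !leqnn d12 => /(_ isT) ? /(_ isT) ?.
by apply/andP; lia.
Qed.

Lemma union_set_isubset (D : seq interval) (U I : interval) : union_set D =i iset U -> U.1 <= U.2 ->
  {in D, forall d, isubset d I} -> isubset U I.
Proof.
move=> DU U12 DI; have inI e : U.1 <= e <= U.2 -> I.1 <= e <= I.2.
  by rewrite -mem_iset -DU => /mem_union_set[d /DI dI]; rewrite mem_iset; apply: isubset_mem.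
have := inI U.1; have := inI U.2; rewrite /isubset !leqnn U12 => /(_ isT) ? /(_ isT) ?.
by apply/andP; lia.
Qed.

(** * Common and strong intervals *)

Definition perm_family n (P : seq (seq nat)) :=
  [/\ 1 <= n, P != [::], all (fun p => perm_eq p (iota 1 n)) P & head [::] P = iota 1 n].

Section Family.
Variables (n : nat) (P : seq (seq nat)).
Hypothesis hP : perm_family n P.

Local Notation common := (Defs.common P).
Local Notation strong := (Defs.strong n P).
Local Notation child := (Defs.child n P).

Lemma family_perm p : p \in P -> perm_eq p (iota 1 n).
Proof. by case: hP => _ _ /allP Pperm _ /Pperm. Qed.

Lemma family_uniq p : p \in P -> uniq p.
Proof. by move/family_perm/perm_uniq ->; apply: iota_uniq. Qed.

Lemma family_mem p x : p \in P -> (x \in p) = (1 <= x <= n).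
Proof. by move/family_perm/perm_mem ->; rewrite mem_iota; apply/idP/idP; lia. Qed.

Lemma iota_in_family : iota 1 n \in P.
Proof. by case: hP => _; case: P => [//|q Q] _ _ /= ->; rewrite inE eqxx. Qed.

Lemma common_setP S : is_common_set P S <->
  S != [::] /\ forall p, p \in P -> consecutive p (fun x => x \in S).
Proof.
rewrite /is_common_set; split=> [/andP[Sne /allP Swin]|[Sne Sconv]].
  by split=> // p pP; apply: window_consecutive (Swin p pP); apply: family_uniq.
rewrite Sne; apply/allP=> p pP.
by apply: consecutive_window (Sconv p pP) => //; apply: family_uniq.
Qed.

Lemma eq_common_set S S' : S =i S' -> is_common_set P S = is_common_set P S'.
Proof.
have nilE (s s' : seq nat) : s =i s' -> (s == [::]) = (s' == [::]).
  by case: s => [|x s]; case: s' => [|y s'] // ss'; [move: (ss' y) | move: (ss' x)];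
     rewrite inE eqxx.
move=> SS'; apply/idP/idP=> /common_setP[Sne Sconv]; apply/common_setP;
  rewrite (nilE _ _ SS') in Sne *; split=> // p pP;
  by apply: eq_consecutive (Sconv p pP) => x; rewrite SS'.
Qed.

Lemma commonP I : common I <->
  I.1 <= I.2 /\ forall p, p \in P -> consecutive p (fun x => I.1 <= x <= I.2).
Proof.
rewrite /Defs.common common_setP -size_eq0 size_iota subn_eq0 -ltnNge ltnS.
by split=> -[-> Iconv]; split=> // p pP; apply: eq_consecutive (Iconv p pP) => x;
   rewrite mem_iset.
Qed.

Lemma common_bounds I : common I -> [/\ 1 <= I.1, I.1 <= I.2 & I.2 <= n].
Proof.
case/commonP=> I12 /(_ _ iota_in_family) [Iiota _].
have := Iiota I.1; have := Iiota I.2; rewrite !mem_iota !leqnn I12 => /(_ isT) ? /(_ isT) ?.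
by split; lia.
Qed.

Lemma common_set_interval S : is_common_set P S -> exists I, S =i iset I.
Proof.
case/common_setP=> + /(_ _ iota_in_family) [Siota Sconv].
have Sn x : x \in S -> 1 <= x <= n by move/Siota; rewrite mem_iota; lia.
case: S Siota Sconv Sn => [//|x0 S'] Siota Sconv Sn _; set S := x0 :: S' in Siota Sconv Sn *.
have exS : exists x, x \in S by exists x0; rewrite inE eqxx.
have Sbound x : x \in S -> x <= n by move/Sn; lia.
case: (ex_minnP exS) => m mS mmin; case: (ex_maxnP exS Sbound) => M MS Mmax.
exists (m, M) => x; rewrite mem_iset /=; apply/idP/idP=> [xS|xmM].
  by rewrite (mmin _ xS) (Mmax _ xS).
have := Sn _ mS; have := Sn _ MS => ? ?.
by apply: (Sconv m M) => //; rewrite ?mem_iota ?index_iota1; lia.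
Qed.

Lemma common_overlap (A B : interval) : common A -> common B ->
  A.1 < B.1 -> B.1 <= A.2 -> A.2 < B.2 ->
  [/\ common (A.1, B.1.-1), common (B.1, A.2), common (A.2.+1, B.2) & common (A.1, B.2)].
Proof.
move=> /commonP[A12 Aconv] /commonP[B12 Bconv] AB1 BA AB2.
split; apply/commonP; split=> [|p pP]; try (simpl; lia);
  have [cA cB] := (Aconv p pP, Bconv p pP).
- by apply: (consecutiveD (b0 := B.2) cA cB) => [||x /=]; try (apply/idP/idP; lia); lia.
- by apply: (consecutiveI cA cB) => x /=; apply/idP/idP; lia.
- by apply: (consecutiveD (b0 := A.1) cB cA) => [||x /=]; try (apply/idP/idP; lia); lia.
- by apply: (consecutiveU (c := B.1) cA cB) => [||x /=]; try (apply/idP/idP; lia); lia.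
Qed.

Lemma strong_common I : strong I -> common I.
Proof. by case/andP. Qed.

Lemma common_all_intervals I : common I -> I \in all_intervals n.
Proof. by case/common_bounds=> ? ? ?; rewrite mem_all_intervals; apply/and3P. Qed.

Lemma strong_bounds I : strong I -> [/\ 1 <= I.1, I.1 <= I.2 & I.2 <= n].
Proof. by move/strong_common/common_bounds. Qed.

Lemma strong_no_overlap y J : strong y -> common J ->
  ~~ [&& y.1 < J.1, J.1 <= y.2 & y.2 < J.2] /\ ~~ [&& J.1 < y.1, y.1 <= J.2 & J.2 < y.2].
Proof.
case/andP=> _ /allP ystrong cJ; have := ystrong J (common_all_intervals cJ).
by rewrite cJ /overlap negb_or !andbA => /andP.
Qed.

Lemma overlap_of_not_strong I : common I -> ~~ strong I -> exists2 J, common J & overlap I J.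
Proof.
move=> cI; rewrite /Defs.strong cI => /allPn[J _]; rewrite negbK => /andP[cJ IJ].
by exists J.
Qed.

Lemma strong_point e : 1 <= e <= n -> strong (e, e).
Proof.
move=> e_n; apply/andP; split.
  apply/commonP; split=> //= p pP; split=> [x ex|u v w eu ev wp uwv].
    by rewrite (family_mem _ pP); lia.
  have ue : u = e by lia.
  have ve : v = e by lia.
  have ep : e \in p by rewrite (family_mem _ pP).
  have : index w p = index e p by move: uwv; rewrite ue ve; lia.
  by move/(congr1 (nth 0 p)); rewrite !nth_index // => ->; rewrite leqnn.
by apply/allP=> -[j1 j2] _; rewrite negb_and /overlap /=; apply/orP; right; apply/negP; lia.
Qed.

Lemma strong_root : strong (1, n).
Proof.
case: hP => n_gt0 _ _ _; apply/andP; split.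
  apply/commonP; split=> //= p pP.
  by split=> [x|u v w ? ? wp _]; rewrite ?(family_mem _ pP) // -(family_mem _ pP).
apply/allP=> -[j1 j2]; rewrite mem_all_intervals => /and3P[/= ? ? ?].
by rewrite negb_and /overlap /=; apply/orP; right; apply/negP; lia.
Qed.

Lemma strong_incomparable y z : strong y -> strong z ->
  ~~ iproper y z -> ~~ iproper z y -> y = z \/ y.2 < z.1 \/ z.2 < y.1.
Proof.
move=> sy sz; have [yz zy] := strong_no_overlap sy (strong_common sz).
have [? ? ?] := strong_bounds sy; have [? ? ?] := strong_bounds sz.
rewrite !iproperE => nyz nzy.
have [/andP[/eqP e1 /eqP e2]|ne] := boolP ((y.1 == z.1) && (y.2 == z.2)).
  by left; apply: interval_ext.
by right; lia.
Qed.

Lemma strong_nested_at y z e : strong y -> strong z ->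
  y.1 <= e <= y.2 -> z.1 <= e <= z.2 -> [\/ iproper y z, iproper z y | y = z].
Proof.
move=> sy sz ey ez.
have [yz|nyz] := boolP (iproper y z); first exact: Or31.
have [zy|nzy] := boolP (iproper z y); first exact: Or32.
by case: (strong_incomparable sy sz nyz nzy) => [->|]; [apply: Or33 | lia].
Qed.

(** * Maximal strong subintervals and the PQ-tree *)

Definition max_strong_sub I y :=
  [/\ strong y, iproper y I & forall w, strong w -> iproper y w -> iproper w I -> False].

Lemma exists_max_strong_sub I s : strong s -> iproper s I -> I.2 <= n ->
  exists y, isubset s y /\ max_strong_sub I y.
Proof.
move=> ss sI I_n.
pose Q m := has (fun y => [&& strong y, isubset s y, iproper y I & isize y == m])
                (all_intervals n).
have exQ : exists m, Q m.
  exists (isize s); apply/hasP; exists s; first exact/common_all_intervals/strong_common.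
  by rewrite ss sI eqxx /isubset !leqnn.
have Qbound m : Q m -> m <= n.
  case/hasP=> y; rewrite mem_all_intervals iproperE /isize => /and3P[? ? ?].
  by case/and4P=> _ _ /and3P[? ? _] /eqP <-; lia.
case: (ex_maxnP exQ Qbound) => m /hasP[y _ /and4P[sy sy' yI /eqP ym]] mmax.
exists y; split=> //; split=> // w sw yw wI.
have [? ? _] := strong_bounds sy.
have : Q (isize w).
  apply/hasP; exists w; first exact/common_all_intervals/strong_common.
  rewrite sw wI eqxx andbT /=; move: sy' yw; rewrite iproperE /isubset.
  by move=> /andP[? ?] /and3P[? ? _]; apply/andP; split; lia.
by move/mmax; have := isize_iproper _ yw; lia.
Qed.

Lemma max_strong_sub_cover I e : common I -> I.1 < I.2 -> I.1 <= e <= I.2 ->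
  exists y, max_strong_sub I y /\ y.1 <= e <= y.2.
Proof.
move=> cI I12 eI; have [? ? I_n] := common_bounds cI.
have se : strong (e, e) by apply: strong_point; lia.
have eI' : iproper (e, e) I by rewrite iproperE /=; apply/and3P; split; lia.
have [y [ey My]] := exists_max_strong_sub se eI' I_n.
by exists y; split=> //; move: ey; rewrite /isubset.
Qed.

Lemma childP y x : child y x <->
  [/\ strong x, strong y, iproper y x & forall z, strong z -> iproper y z -> isubset x z].
Proof.
split=> [/and4P[sx sy yx /allP ymin]|[sx sy yx ymin]].
  by split=> // z sz yz; have := ymin z (common_all_intervals (strong_common sz)); rewrite sz yz.
apply/and4P; split=> //; apply/allP=> z _; apply/implyP=> /andP[]; exact: ymin.
Qed.

Lemma max_strong_sub_child y x : strong x -> max_strong_sub x y -> child y x.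
Proof.
move=> sx [sy yx ymax]; apply/childP; split=> // z sz yz.
have [xz zx] := strong_no_overlap sz (strong_common sx).
have [? ? ?] := strong_bounds sy; have [? ? ?] := strong_bounds sz.
have [//|nxz] := boolP (isubset x z); case: (ymax z sz yz).
move: nxz yx yz xz zx; rewrite !iproperE /isubset => ? /and3P[? ? ?] /and3P[? ? ?] ? ?.
by apply/and3P; split; lia.
Qed.

Lemma child_max_strong_sub y x : child y x -> max_strong_sub x y.
Proof.
case/childP=> sx sy yx ymin; split=> // w sw yw wx.
by move: (ymin w sw yw) wx; rewrite iproperE /isubset => /andP[? ?] /and3P[? ? ?]; lia.
Qed.

Lemma child_bounds y x : child y x ->
  [/\ x.1 <= y.1, y.1 <= y.2, y.2 <= x.2 & (x.1 < y.1) || (y.2 < x.2)].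
Proof.
by case/childP=> _ /strong_bounds[_ ? _] + _; rewrite iproperE => /and3P[? ? ?].
Qed.

Lemma child_cover x e : strong x -> x.1 < x.2 -> x.1 <= e <= x.2 ->
  exists y, child y x /\ y.1 <= e <= y.2.
Proof.
move=> sx x12 ex; have [y [My ey]] := max_strong_sub_cover (strong_common sx) x12 ex.
by exists y; split=> //; apply: max_strong_sub_child.
Qed.

Lemma mem_children y x : (y \in children n P x) = child y x.
Proof.
rewrite mem_filter andb_idr // => /childP[_ sy _ _].
exact/common_all_intervals/strong_common.
Qed.

Lemma children_uniq x : uniq (children n P x).
Proof. exact/filter_uniq/all_intervals_uniq. Qed.

Lemma max_strong_sub_disjoint I y z : max_strong_sub I y -> max_strong_sub I z ->
  y = z \/ y.2 < z.1 \/ z.2 < y.1.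
Proof.
case=> sy yI ymax [sz zI zmax].
apply: strong_incomparable => //.
  by apply/negP=> /ymax-/(_ sz zI).
by apply/negP=> /zmax-/(_ sy yI).
Qed.

Lemma children_disjoint y z x : child y x -> child z x ->
  y = z \/ y.2 < z.1 \/ z.2 < y.1.
Proof.
by move=> /child_max_strong_sub My /child_max_strong_sub; apply: max_strong_sub_disjoint.
Qed.

Lemma strong_sub_of_meet c J e : strong c -> common J -> ~~ isubset J c ->
  c.1 <= e <= c.2 -> J.1 <= e <= J.2 -> isubset c J.
Proof.
move=> sc cJ; have [cJ1 cJ2] := strong_no_overlap sc cJ.
by rewrite /isubset => ? ? ?; apply/andP; split; lia.
Qed.

Definition children_in x J := [seq z <- children n P x | isubset z J].

Section ChildrenIn.
Variables x J : interval.
Hypotheses (sx : strong x) (cJ : common J) (Jx : iproper J x).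

Lemma child_not_in : exists2 c, child c x & ~~ isubset c J.
Proof.
have x12 : x.1 < x.2 by apply: iproper_nontrivial Jx; case/common_bounds: cJ.
move: Jx; rewrite iproperE => /and3P[? ? ?].
have [xJ|Jx1] := ltnP x.1 J.1.
  have [|c [cx ec]] := child_cover sx x12 (e := x.1); first by rewrite leqnn ltnW.
  by exists c; rewrite // /isubset; apply/negP; lia.
have [|c [cx ec]] := child_cover sx x12 (e := x.2); first by rewrite leqnn ltnW.
by exists c; rewrite // /isubset; apply/negP; lia.
Qed.

Hypothesis J_not_in_child : forall c, child c x -> ~~ isubset J c.

Lemma children_in_cover : union_set (children_in x J) =i iset J.
Proof.
have x12 : x.1 < x.2 by apply: iproper_nontrivial Jx; case/common_bounds: cJ.
move: Jx; rewrite iproperE => /and3P[? ? _].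
move=> e; rewrite mem_iset; apply/mem_union_set/idP=> [[c]|eJ].
  by rewrite mem_filter /isubset mem_iset => /andP[? _] ?; lia.
have [|c [cx ec]] := child_cover sx x12 (e := e); first lia.
exists c; rewrite ?mem_iset // mem_filter mem_children cx andbT.
by apply: (strong_sub_of_meet (e := e)); rewrite // ?(J_not_in_child cx) //; case/childP: cx.
Qed.

Lemma children_in_gt1 : 1 < size (children_in x J).
Proof.
have [_ J12 _] := common_bounds cJ.
have eJ1 : J.1 \in union_set (children_in x J) by rewrite children_in_cover mem_iset leqnn.
have eJ2 : J.2 \in union_set (children_in x J) by rewrite children_in_cover mem_iset leqnn andbT.
case/mem_union_set: eJ1 => c1 c1J; case/mem_union_set: eJ2 => c2 c2J.
rewrite !mem_iset => ? ?; apply: (size_gt1 c1J c2J); apply/eqP=> c12; subst c2.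
move: c1J; rewrite mem_filter mem_children => /andP[_ /J_not_in_child].
by rewrite /isubset; apply/negP; rewrite negbK; apply/andP; split; lia.
Qed.

End ChildrenIn.

Lemma Pnode_children_in_size x J : Pnode n P x -> common J -> iproper J x ->
  union_set (children_in x J) =i iset J -> size (children_in x J) <= 1.
Proof.
case=> sx xP cJ Jx cover; rewrite leqNgt; apply/negP=> gt1.
have [c cx cJ'] := child_not_in sx cJ Jx.
have lt : size (children_in x J) < size (children n P x).
  by apply: (size_filter_lt (c := c)); rewrite ?mem_children.
have := xP _ (filter_subseq _ _) (introT andP (conj gt1 lt)).
by rewrite (eq_common_set cover) -/(Defs.common P J) cJ.
Qed.

Lemma Pnode_sub_child x J : Pnode n P x -> common J -> iproper J x ->
  exists2 y, child y x & isubset J y.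
Proof.
move=> xP cJ Jx; have [/hasP[y + Jy]|] := boolP (has (isubset J) (children n P x)).
  by rewrite mem_children => yx; exists y.
move/hasPn=> Jnot; have {}Jnot c : child c x -> ~~ isubset J c by rewrite -mem_children => /Jnot.
have sx := xP.1; have := Pnode_children_in_size xP cJ Jx (children_in_cover sx cJ Jx Jnot).
by rewrite leqNgt children_in_gt1.
Qed.

(** * The domain of a common interval *)

Lemma exists_min_strong_sup I : common I ->
  exists x, [/\ strong x, isubset I x & forall w, strong w -> isubset I w -> isize x <= isize w].
Proof.
move=> cI; have [? ? ?] := common_bounds cI.
pose Q m := has (fun x => [&& strong x, isubset I x & isize x == m]) (all_intervals n).
have exQ : exists m, Q m.
  exists (isize (1, n)); apply/hasP; exists (1, n).
    exact/common_all_intervals/strong_common/strong_root.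
  by rewrite strong_root eqxx /isubset /= andbT; apply/andP.
case: (ex_minnP exQ) => m /hasP[x _ /and3P[sx Ix /eqP xm]] mmin.
exists x; split=> // w sw Iw; rewrite xm; apply: mmin; apply/hasP; exists w.
  exact/common_all_intervals/strong_common.
by rewrite sw Iw eqxx.
Qed.

Lemma inD_max_strong_sub I y : common I -> inD n P I y -> max_strong_sub I y.
Proof.
rewrite /inD => cI; case: ifP => [sI|nsI [x [[sx _] yx yI cover]]].
  by move/child_max_strong_sub.
case/childP: (yx) => _ sy _ ymin.
have Ix : isubset I x.
  have [_ I12 _] := common_bounds cI.
  have inx e : I.1 <= e <= I.2 -> x.1 <= e <= x.2.
    rewrite -mem_iset -cover => /mem_union_set[c]; rewrite mem_filter mem_children mem_iset.
    by case/andP=> _ /child_bounds[? ? ? _] ?; lia.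
  by have := inx I.1; have := inx I.2; rewrite !leqnn I12 /isubset => /(_ isT) ? /(_ isT) ?; lia.
split=> // [|w sw yw wI].
  by rewrite /iproper yI; apply: contraFneq nsI => <-.
by case/negP: (iproper_subN wI); apply: isubset_trans Ix (ymin w sw yw).
Qed.

Lemma max_strong_sub_inD I y : common I -> I.1 < I.2 -> max_strong_sub I y -> inD n P I y.
Proof.
move=> cI I12 My; rewrite /inD; case: ifP => [sI|nsI]; first exact: max_strong_sub_child.
have [x [sx Ix xmin]] := exists_min_strong_sup cI.
have Ix' : iproper I x by rewrite /iproper Ix; apply: contraFneq nsI => ->.
have Inot c : child c x -> ~~ isubset I c.
  case/childP=> _ sc cx _; apply/negP=> /(xmin c sc).
  by have [_ ? _] := strong_bounds sc; have := isize_iproper _ cx; lia.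
have cover := children_in_cover sx cI Ix' Inot.
have xQ : Qnode n P x.
  split=> // xP; have := Pnode_children_in_size xP cI Ix' cover.
  by rewrite leqNgt (children_in_gt1 sx cI Ix' Inot).
case: My => sy yI ymax; have [_ y12 _] := strong_bounds sy.
have yI' : isubset y I by case/andP: yI.
have ey : y.1 <= y.1 <= y.2 by rewrite leqnn.
have eI := isubset_mem yI' ey; exists x; split=> //.
have [c [cx ec]] := child_cover sx (iproper_nontrivial (ltnW I12) Ix') (isubset_mem Ix eI).
case/childP: (cx) => _ sc _ cmin.
have cI' : isubset c I by apply: strong_sub_of_meet ec eI; [| | exact: Inot].
case: (strong_nested_at sc sy ec ey) => [/(cmin _ sy) xy|yc|<- //].
  by case/negP: (iproper_subN Ix'); apply: isubset_trans xy yI'.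
case: (ymax c sc yc); rewrite /iproper cI'; apply: contraFneq nsI => <-.
by case/childP: cx.
Qed.

Lemma inDE I y : common I -> I.1 < I.2 -> inD n P I y <-> max_strong_sub I y.
Proof. by move=> cI I12; split; [apply: inD_max_strong_sub | apply: max_strong_sub_inD]. Qed.

(** * Splitting intervals that are not P-intervals *)

Definition common_split I :=
  exists m, [/\ I.1 <= m, m < I.2, common (I.1, m) & common (m.+1, I.2)].

Definition free_sub I W :=
  [&& common W, iproper W I &
      all (fun z => strong z && isubset W z ==> ~~ iproper z I) (all_intervals n)].

Lemma free_subP I W : free_sub I W <->
  [/\ common W, iproper W I & forall z, strong z -> isubset W z -> ~~ iproper z I].
Proof.
split=> [/and3P[cW WI /allP Wfree]|[cW WI Wfree]].
  split=> // z sz Wz; move: (Wfree z (common_all_intervals (strong_common sz))).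
  by rewrite sz Wz.
by rewrite /free_sub cW WI; apply/allP=> z _; apply/implyP=> /andP[]; apply: Wfree.
Qed.

Lemma free_sub_grow I W V : free_sub I W -> common V -> isubset W V -> iproper V I ->
  free_sub I V.
Proof.
case/free_subP=> _ _ Wfree cV WV VI; apply/free_subP; split=> // z sz Vz.
by apply: Wfree sz _; apply: isubset_trans WV Vz.
Qed.

Lemma exists_max_free_sub I : (exists W, free_sub I W) ->
  exists W, free_sub I W /\ forall V, free_sub I V -> isize V <= isize W.
Proof.
pose Q m := has (fun W => free_sub I W && (isize W == m)) (all_intervals n).
case=> W0 W0I; have exQ : exists m, Q m.
  exists (isize W0); apply/hasP; exists W0; last by rewrite W0I eqxx.
  by case/free_subP: W0I => /common_all_intervals.
have Qbound m : Q m -> m <= n.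
  case/hasP=> W; rewrite mem_all_intervals /isize => /and3P[? ? ?] /andP[_ /eqP <-]; lia.
case: (ex_maxnP exQ Qbound) => m /hasP[W _ /andP[WI /eqP Wm]] mmax.
exists W; split=> // V VI; rewrite Wm; apply: mmax; apply/hasP; exists V; last by rewrite VI eqxx.
by case/free_subP: VI => /common_all_intervals.
Qed.

(* A largest free subinterval [W] is not strong; growing it by an interval overlapping it
   must produce all of [I], which splits [I] at an end of [W]. *)
Lemma free_sub_split I : strong I -> (exists W, free_sub I W) -> common_split I.
Proof.
move=> sI /exists_max_free_sub[W [WI Wmax]]; case/free_subP: (WI) => cW WsI Wfree.
have nsW : ~~ strong W.
  by apply/negP=> /Wfree/(_ _)/negP; apply; rewrite // /isubset !leqnn.
have [K cK WK] := overlap_of_not_strong cW nsW.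
have [? ? ?] := common_bounds cW; have [? ? ?] := common_bounds cK.
have /andP[? ?] : isubset K I.
  have [IK1 IK2] := strong_no_overlap sI cK; move: WsI WK; rewrite iproperE /overlap /isubset.
  by move=> /and3P[? ? _] /orP[] /andP[/andP[? ?] ?]; apply/andP; split; lia.
have grow V : common V -> isubset W V -> isize W < isize V -> isubset V I -> V = I.
  move=> cV WV WVs VI; apply/eqP; apply: contraTT WVs => VnI; rewrite -leqNgt.
  by apply/Wmax/(free_sub_grow WI) => //; rewrite /iproper VI.
move: WsI WK => {WI Wmax Wfree nsW}; rewrite iproperE /overlap.
move=> /and3P[? ? _] /orP[] /andP[/andP[WK1 KW] WK2].
- have [_ _ _ cU] := common_overlap cW cK WK1 KW WK2.
  have <- : (W.1, K.2) = I.
    by apply: grow; rewrite // /isubset /isize /=; try (apply/andP; split); lia.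
  by have [_ _ cR _] := common_overlap cW cK WK1 KW WK2; exists W.2; split=> //=; lia.
- have [cL _ _ cU] := common_overlap cK cW WK1 KW WK2.
  have <- : (K.1, W.2) = I.
    by apply: grow; rewrite // /isubset /isize /=; try (apply/andP; split); lia.
  by exists W.1.-1; rewrite /= prednK //; split=> //; lia.
Qed.


(* The union [U] of some, but not all, children of [I] lies in no strong proper subinterval
   of [I]: such an interval would strictly contain a child, hence contain [I]. *)
Lemma union_children_free I (D : seq interval) : strong I -> subseq D (children n P I) ->
  1 < size D < size (children n P I) -> is_common_set P (union_set D) ->
  exists W, free_sub I W.
Proof.
move=> sI Dsub /andP[D_gt1 D_lt] cD; have [U DU] := common_set_interval cD.
have cU : common U by rewrite /Defs.common -(eq_common_set DU).
have [_ U12 _] := common_bounds cU.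
have Dchild d : d \in D -> child d I by move/(mem_subseq Dsub); rewrite mem_children.
have DU' (d : interval) : d \in D -> isubset d U.
  by move=> dD; apply: (union_set_sub DU dD); case: (child_bounds (Dchild _ dD)).
have UI : isubset U I.
  apply: union_set_isubset DU U12 _ => d /Dchild /child_bounds[? ? ? _].
  by rewrite /isubset; apply/andP.
have [c3 c3I c3D] : exists2 c : interval, child c I & c \notin D.
  by have [c] := exists_notin_size (children_uniq I) D_lt; rewrite mem_children; exists c.
have UnI : U != I.
  apply/eqP=> UeI; have [? ? ? _] := child_bounds c3I.
  have : c3.1 \in union_set D by rewrite DU UeI mem_iset; lia.
  case/mem_union_set=> d dD; rewrite mem_iset => ed; have [? ? ? _] := child_bounds (Dchild _ dD).
  by case: (children_disjoint (Dchild _ dD) c3I) => [dc3|]; [rewrite -dc3 dD in c3D | lia].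
have [c1 [c2 [c1D c2D c12]]] : exists c1 c2 : interval, [/\ c1 \in D, c2 \in D & c1 != c2].
  exact: uniq_size_gt1 (subseq_uniq Dsub (children_uniq I)) D_gt1.
exists U; apply/free_subP; split=> //; first by rewrite /iproper UI.
move=> z sz Uz; case/childP: (Dchild _ c1D) => _ _ _ c1min.
have c1z : iproper c1 z.
  have [_ c2b _ _] := child_bounds (Dchild _ c2D).
  have [e12|c12'] := children_disjoint (Dchild _ c1D) (Dchild _ c2D).
    by rewrite e12 eqxx in c12.
  exact: iproper_sup_of_disjoint c2b c12' (DU' _ c1D) (DU' _ c2D) Uz.
by apply/negP=> /andP[zI /eqP]; apply; apply: isubset_antisym zI (c1min z sz c1z).
Qed.

Lemma common_split_of_not_P I : common I -> I.1 < I.2 -> ~ P_interval n P I -> common_split I.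
Proof.
move=> cI I12 nPI; have [sI|nsI] := boolP (strong I).
  apply: free_sub_split => //; apply: NNPP => nofree; apply: nPI; split=> // D Dsub Dsize.
  by apply/negP=> cD; apply: nofree; apply: (union_children_free sI Dsub Dsize cD).
have [K cK] := overlap_of_not_strong cI nsI; rewrite /overlap => /orP[] /andP[/andP[IK1 KI] IK2].
  have [cL cM _ _] := common_overlap cI cK IK1 KI IK2.
  by exists K.1.-1; rewrite prednK; [split=> //; lia | lia].
by have [_ cM cR _] := common_overlap cK cI IK1 KI IK2; exists K.2; split=> //; lia.
Qed.

Lemma strong_before_min_suffix i1 i2 s : common (i1, i2) -> i1 < s <= i2 ->
  common (s, i2) -> common (i1, s.-1) -> (forall t, i1 < t < s -> common (t, i2) -> False) ->
  strong (i1, s.-1).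
Proof.
move=> cI /andP[i_s si] cS cF nosuf; rewrite /Defs.strong cF.
apply/allP=> -[k1 k2] _; apply/negP=> /andP[cK]; have [? ? ?] := common_bounds cK.
rewrite /overlap /= => /orP[] /andP[/andP[iK Ks] sK].
  case: (ltngtP k2 i2) => [sK2|Ks2|Ke].
  - have [_ _ _ cU] := common_overlap cK cS (ltac:(simpl; lia)) (ltac:(simpl; lia)) sK2.
    by apply: (nosuf k1 _ cU); lia.
  - have [_ cM _ _] := common_overlap cI cK (ltac:(simpl; lia)) (ltac:(simpl; lia)) Ks2.
    by apply: (nosuf k1 _ cM); lia.
  - by rewrite Ke in cK; apply: (nosuf k1 _ cK); lia.
have [_ _ cR _] := common_overlap cK cI iK Ks (ltac:(simpl; lia)).
by apply: (nosuf k2.+1 _ cR); lia.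
Qed.

Lemma strong_after_max_prefix i1 i2 a : common (i1, i2) -> i1 <= a < i2 ->
  common (i1, a) -> common (a.+1, i2) -> (forall t, a < t < i2 -> common (i1, t) -> False) ->
  strong (a.+1, i2).
Proof.
move=> cI /andP[ia ai] cA cG nopre; rewrite /Defs.strong cG.
apply/allP=> -[k1 k2] _; apply/negP=> /andP[cK]; have [? ? ?] := common_bounds cK.
rewrite /overlap /= => /orP[] /andP[/andP[aK Ki] iK].
  have [cL _ _ _] := common_overlap cI cK (ltac:(simpl; lia)) Ki iK.
  by apply: (nopre k1.-1 _ cL); lia.
case: (ltngtP k1 i1) => [Ki1|iK1|Ke].
- have [_ cM _ _] := common_overlap cK cI Ki1 (ltac:(simpl; lia)) iK.
  by apply: (nopre k2 _ cM); lia.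
- have [_ _ _ cU] := common_overlap cA cK iK1 (ltac:(simpl; lia)) (ltac:(simpl; lia)).
  by apply: (nopre k2 _ cU); lia.
- by rewrite Ke in cK; apply: (nopre k2 _ cK); lia.
Qed.

(* The maximal strong subinterval [L] at the left end of a split interval is the shortest
   prefix whose complement is common. *)
Lemma common_after_left_max I L : common I -> common_split I -> max_strong_sub I L ->
  L.1 <= I.1 <= L.2 -> common (L.2.+1, I.2).
Proof.
case: I => i1 i2 cI [m /= [im mi cA cB]] [sL LI Lmax] Li.
pose Q s := [&& i1 < s, s <= i2 & common (s, i2)].
have exQ : exists s, Q s by exists m.+1; rewrite /Q cB andbT; apply/andP; split; lia.
case: (ex_minnP exQ) => s /and3P[i_s si cS] smin.
have sm : s <= m.+1 by apply: smin; rewrite /Q cB andbT; apply/andP; split; lia.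
have nosuf t : i1 < t < s -> common (t, i2) -> False.
  by case/andP=> it ts ct; have := smin t; rewrite /Q it ct andbT /=; lia.
have cF : common (i1, s.-1).
  have [<- //|sm'] := eqVneq m.+1 s.
  by have [] := common_overlap cA cS i_s (ltac:(simpl; lia)) mi.
have sF : strong (i1, s.-1) by apply: strong_before_min_suffix cI _ cS cF nosuf; apply/andP.
have [|nLF] := boolP (iproper L (i1, s.-1)).
  by move/Lmax=> /(_ sF) []; rewrite iproperE /= leqnn; lia.
have /= [LS1 LS2] := strong_no_overlap sL cS; have /= [LF1 LF2] := strong_no_overlap sL cF.
have [? ? ?] := strong_bounds sL.
by move: LI nLF; rewrite !iproperE /= => /and3P[? ? ?] ?; have -> : L.2.+1 = s by lia.
Qed.

Lemma common_before_right_max I R : common I -> common_split I -> max_strong_sub I R ->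
  R.1 <= I.2 <= R.2 -> common (I.1, R.1.-1).
Proof.
case: I => i1 i2 cI [m /= [im mi cA cB]] [sR RI Rmax] Ri.
pose Q a := [&& i1 <= a, a < i2 & common (i1, a)].
have exQ : exists a, Q a by exists m; rewrite /Q cA im mi.
have Qbound a : Q a -> a <= i2 by case/and3P=> _ /ltnW.
case: (ex_maxnP exQ Qbound) => a /and3P[ia ai cPa] amax.
have ma : m <= a by apply: amax; rewrite /Q cA im mi.
have nopre t : a < t < i2 -> common (i1, t) -> False.
  by case/andP=> a_t ti ct; have := amax t; rewrite /Q ti ct andbT /=; lia.
have cG : common (a.+1, i2).
  have [<- //|ma'] := eqVneq m a.
  by have [] := common_overlap cPa cB (ltac:(simpl; lia)) (ltac:(simpl; lia)) ai.
have sG : strong (a.+1, i2) by apply: strong_after_max_prefix cI _ cPa cG nopre; apply/andP.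
have [|nRG] := boolP (iproper R (a.+1, i2)).
  by move/Rmax=> /(_ sG) []; rewrite iproperE /= leqnn; lia.
have /= [RA1 RA2] := strong_no_overlap sR cPa; have /= [RG1 RG2] := strong_no_overlap sR cG.
have [? ? ?] := strong_bounds sR.
by move: RI nRG; rewrite !iproperE /= => /and3P[? ? ?] ?; have -> : R.1.-1 = a by lia.
Qed.

Definition end_complement I L J :=
  (L.1 = I.1 /\ J = (L.2.+1, I.2)) \/ (L.2 = I.2 /\ J = (I.1, L.1.-1)).

Lemma end_complement_iproper I L J : iproper L I -> L.1 <= L.2 -> end_complement I L J ->
  iproper J I /\ isize I = isize J + isize L.
Proof.
rewrite iproperE /isize => /and3P[? ? ?] ? [[? ->]|[? ->]] /=.
  by rewrite iproperE /=; split; [apply/and3P; split|]; lia.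
by rewrite iproperE /=; split; [apply/and3P; split|]; lia.
Qed.

Lemma end_complement_sub I L J w e : max_strong_sub I L -> end_complement I L J ->
  strong w -> iproper w I -> w.1 <= e <= w.2 -> J.1 <= e <= J.2 -> isubset w J.
Proof.
move=> [sL LI Lmax] LJ sw wI ew eJ; have [? ? ?] := strong_bounds sL.
have [Lw|nLw] := boolP (iproper L w); first by case: (Lmax w sw Lw wI).
have /= [wL1 wL2] := strong_no_overlap sw (strong_common sL).
move: LI wI nLw eJ; rewrite !iproperE /isubset.
by case: LJ => -[? ->] /= /and3P[? ? ?] /and3P[? ? ?] ? ?; apply/andP; split; lia.
Qed.

Lemma end_complement_strong I L J : max_strong_sub I L -> end_complement I L J ->
  strong J -> max_strong_sub I J.
Proof.
move=> ML LJ sJ; have [sL LI _] := ML; have [_ L12 _] := strong_bounds sL.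
have [JI _] := end_complement_iproper LI L12 LJ; split=> // w sw Jw wI.
have [_ J12 _] := strong_bounds sJ; have eJ : J.1 <= J.1 <= J.2 by rewrite leqnn.
case/negP: (iproper_subN Jw); apply: (end_complement_sub ML LJ sw wI _ eJ).
exact: isubset_mem (iproper_sub Jw) eJ.
Qed.

Lemma end_complement_max_strong_sub I L J y : max_strong_sub I L -> end_complement I L J ->
  ~~ strong J -> max_strong_sub J y -> max_strong_sub I y.
Proof.
move=> ML LJ nsJ [sy yJ ymax]; have [sL LI _] := ML; have [_ L12 _] := strong_bounds sL.
have [JI _] := end_complement_iproper LI L12 LJ.
have yI : iproper y I.
  by move: yJ JI; rewrite !iproperE => /and3P[? ? ?] /and3P[? ? ?]; apply/and3P; split; lia.
split=> // w sw yw wI; apply: (ymax w sw yw).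
have [_ y12 _] := strong_bounds sy; have ey : y.1 <= y.1 <= y.2 by rewrite leqnn.
have wJ := end_complement_sub ML LJ sw wI (isubset_mem (iproper_sub yw) ey)
  (isubset_mem (iproper_sub yJ) ey).
by rewrite /iproper wJ; apply: contraNneq nsJ => <-.
Qed.

(** * b-nested intervals *)

Section Nested.
Variable b : nat.
Hypothesis b_gt0 : 0 < b.

Lemma bnested_small I : common I -> isize I <= b.+1 -> bnested P b I.
Proof.
move=> cI Ib; have [? ? ?] := common_bounds cI.
have [/eqP I1|I1] := boolP (isize I == 1); first exact: bnested_single.
have cJ : common (I.1, I.1) by apply/strong_common/strong_point; lia.
apply: (bnested_step (J := (I.1, I.1))) => //.
- by move: I1; rewrite iproperE /isize /= => ?; apply/and3P; split; lia.
- by move: Ib; rewrite /isize /=; lia.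
- by apply: bnested_single; rewrite // /isize /=; lia.
Qed.

(* A [b]-nested chain down from [J] removes fewer than [|y|] points per step, so it can
   only get past the strong interval [y] by first shrinking onto it. *)
Lemma bnested_large_strong_sub y J : strong y -> ~~ bsmall b y -> bnested P b J ->
  isubset y J -> bnested P b y.
Proof.
rewrite /bsmall -ltnNge /isize => sy yb; have [? ? ?] := strong_bounds sy.
elim=> {J} [J _ J1|J J' cJ cJ' J'J JJ' bJ' IH] yJ.
  by move: J1 yJ; rewrite /isize /isubset => ? /andP[? ?]; lia.
have [yJ'|nyJ'] := boolP (isubset y J'); first exact: IH.
have /= [yJ'1 yJ'2] := strong_no_overlap sy cJ'; have [? ? ?] := common_bounds cJ'.
have J'y : isubset J' y.
  by move: yJ J'J JJ' nyJ'; rewrite iproperE /isubset /isize => /andP[? ?] /and3P[? ? ?] ? ?;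
     apply/andP; split; lia.
have [<- //|J'ny] := eqVneq J' y.
apply: (bnested_step (J := J')) => //; first exact: strong_common sy.
  by rewrite /iproper J'y J'ny.
by move: yJ JJ'; rewrite /isubset /isize => /andP[? ?]; lia.
Qed.

Lemma bnested_no_disjoint_large y z J : strong y -> strong z -> y.2 < z.1 \/ z.2 < y.1 ->
  ~~ bsmall b y -> ~~ bsmall b z -> bnested P b J -> isubset y J -> isubset z J -> False.
Proof.
rewrite /bsmall -!ltnNge /isize => sy sz yz yb zb.
have [? ? ?] := strong_bounds sy; have [? ? ?] := strong_bounds sz.
elim=> {J} [J _ J1|J J' cJ cJ' J'J JJ' _ IH] yJ zJ.
  by move: J1 yJ; rewrite /isize /isubset => ? /andP[? ?]; lia.
have /= [yJ'1 yJ'2] := strong_no_overlap sy cJ'; have /= [zJ'1 zJ'2] := strong_no_overlap sz cJ'.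
have [? ? ?] := common_bounds cJ'.
by apply: IH; move: yJ zJ J'J JJ'; rewrite iproperE /isubset /isize;
   move=> /andP[? ?] /andP[? ?] /and3P[? ? ?] ?; apply/andP; split; lia.
Qed.


Lemma exists_small_end I : common I -> I.1 < I.2 -> common_split I ->
  (forall y z, max_strong_sub I y -> max_strong_sub I z -> ~~ bsmall b y -> ~~ bsmall b z ->
     y = z) ->
  exists L J, [/\ max_strong_sub I L, bsmall b L, common J & end_complement I L J].
Proof.
move=> cI I12 Isplit Muniq.
have [L [ML IL]] : exists L, max_strong_sub I L /\ L.1 <= I.1 <= L.2.
  by apply: max_strong_sub_cover => //; lia.
have [R [MR IR]] : exists R, max_strong_sub I R /\ R.1 <= I.2 <= R.2.
  by apply: max_strong_sub_cover => //; lia.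
have [[_ LI _] [_ RI _]] := (ML, MR); move: LI RI; rewrite !iproperE => /and3P[? ? ?] /and3P[? ? ?].
have [Ls|Ll] := boolP (bsmall b L).
  exists L, (L.2.+1, I.2); split=> //; first exact: common_after_left_max.
  by left; split=> //; lia.
have [Rs|Rl] := boolP (bsmall b R).
  exists R, (I.1, R.1.-1); split=> //; first exact: common_before_right_max.
  by right; split=> //; lia.
by have LR := Muniq L R ML MR Ll Rl; rewrite LR in IL; lia.
Qed.

Lemma bnested_of_max_strong_subs I : common I -> ~ P_interval n P I ->
  (forall y, max_strong_sub I y -> ~~ bsmall b y -> bnested P b y) ->
  (forall y z, max_strong_sub I y -> max_strong_sub I z -> ~~ bsmall b y -> ~~ bsmall b z ->
     y = z) ->
  bnested P b I.
Proof.
have [k] := ubnP (isize I); elim: k I => // k IH I Ik cI nPI Mlarge Muniq.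
have [Ib|Ib] := leqP (isize I) b.+1; first exact: bnested_small.
have I12 : I.1 < I.2 by move: Ib; rewrite /isize; lia.
have [L [J [ML Ls cJ LJ]]] := exists_small_end cI I12 (common_split_of_not_P cI I12 nPI) Muniq.
have [sL LI _] := ML; have [? L12 ?] := strong_bounds sL.
have [JI IJ] := end_complement_iproper LI L12 LJ.
apply: (bnested_step (J := J)) => //; first by move: Ls; rewrite /bsmall; lia.
have [sJ|nsJ] := boolP (strong J).
  have MJ := end_complement_strong ML LJ sJ.
  by have [Js|Jl] := boolP (bsmall b J); [apply: bnested_small; rewrite // ltnW | apply: Mlarge].
have MJI y : max_strong_sub J y -> max_strong_sub I y.
  exact: end_complement_max_strong_sub ML LJ nsJ.
apply: (IH J); [|done|by case=> sJ _; rewrite sJ in nsJ|by move=> y /MJI; apply: Mlarge|].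
  by have [_ J12 _] := common_bounds cJ; have := isize_iproper J12 JI; lia.
by move=> y z /MJI My /MJI Mz; apply: Muniq.
Qed.

Lemma bnested_Pnode_child I : Pnode n P I -> 2 <= isize I -> bnested P b I ->
  exists2 xh, child xh I & bnested P b xh /\ isize I <= isize xh + b.
Proof.
move=> + + bI; case: I / bI => [J _ J1 _ I2|J J' cJ cJ' J'J JJ' bJ' IP _].
  by rewrite J1 in I2.
have [xh xhJ J'xh] := Pnode_sub_child IP cJ' J'J; exists xh => //.
case/childP: xhJ => _ sxh xhI _; have [_ ? _] := common_bounds cJ'.
split; last by move: JJ' J'xh; rewrite /isize /isubset => ? /andP[? ?]; lia.
have [<- //|J'xh'] := eqVneq J' xh.
apply: (bnested_step (J := J')) => //; first exact: strong_common sxh.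
  by rewrite /iproper J'xh J'xh'.
by move: JJ' J'xh xhI; rewrite iproperE /isize /isubset => ? /andP[? ?] /and3P[? ? _]; lia.
Qed.

Lemma max_strong_subs_of_bnested I : bnested P b I ->
  (forall y z, max_strong_sub I y -> max_strong_sub I z -> ~~ bsmall b y -> ~~ bsmall b z ->
     y = z) /\
  (forall y, max_strong_sub I y -> ~~ bsmall b y -> bnested P b y).
Proof.
move=> bI; split=> [y z My Mz yl zl|y [sy yI _] yl].
  case: (max_strong_sub_disjoint My Mz) => // yz; case: My Mz => [sy yI _] [sz zI _].
  by case: (bnested_no_disjoint_large sy sz yz yl zl bI); [case/andP: yI | case/andP: zI].
by apply: (bnested_large_strong_sub sy yl bI); case/andP: yI.
Qed.

End Nested.
End Family.

Theorem theorem3 (n K : nat) (P : seq (seq nat)) (b : nat) (I : interval) :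
  1 <= n -> 1 <= K -> size P = K ->
  all (fun p => perm_eq p (iota 1 n)) P -> head [::] P = iota 1 n ->
  0 < b -> common P I -> 2 <= isize I ->
  bnested P b I <->
  ((P_interval n P I /\
    exists xh, [/\ inD n P I xh, bnested P b xh & isize I <= isize xh + b]) \/
   (Q_interval n P I /\
    (forall y z, inD n P I y -> inD n P I z -> ~~ bsmall b y -> ~~ bsmall b z -> y = z) /\
    (forall y, inD n P I y -> ~~ bsmall b y -> bnested P b y))).
Proof.
move=> n_gt0 K_gt0 PK Pperm Phead b_gt0 cI I2.
have hP : perm_family n P by split=> //; rewrite -size_eq0 PK -lt0n.
have I12 : I.1 < I.2 by move: I2; rewrite /isize; lia.
have DE y : inD n P I y <-> max_strong_sub n P I y by apply: inDE.
split=> [bI|[[IP [xh [xhI bxh Ixh]]]|[[_ nIP] [Muniq Mlarge]]]].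
- have [IP|nIP] := classic (P_interval n P I).
    left; split=> //; have [xh xhI [bxh Ixh]] := bnested_Pnode_child hP b_gt0 IP I2 bI.
    by exists xh; rewrite /inD IP.1.
  have [Muniq Mlarge] := max_strong_subs_of_bnested hP b_gt0 bI.
  right; split; first by split.
  by split=> [y z /DE My /DE Mz|y /DE]; [apply: Muniq | apply: Mlarge].
- move: xhI; rewrite /inD IP.1 => /(childP hP)[_ sxh xhI _].
  exact: bnested_step (strong_common sxh) xhI Ixh bxh.
apply: (bnested_of_max_strong_subs hP b_gt0) => // [y /DE|y z /DE My /DE Mz].
  exact: Mlarge.
exact: Muniq.
Qed.
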